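(* Let $\mathbf i$ be a reduced expression of $w_0$ whose standard seed satisfies properties (A), (B) and (C). Then for every $i,j\in J_{ex}(\mathbf i)$: if $i>j$ then $(\beta_i;P_j)=0$, and $(\beta_i;P_i)=1$.
   Context: $\mathfrak g$ is a complex simple Lie algebra of simply-laced type, vertex set $I=\{1,\dots,n\}$, Cartan entries $i\cdot j$, Weyl group with simple reflections $s_i$, longest element $w_0$, $N=\ell(w_0)$, fundamental weights $\omega_i$. $\overline D:\mathbb C[\mathsf N]\to\mathbb C(\alpha_1,\dots,\alpha_n)$ is the algebra morphism $\overline D(f)=\sum_{\mathbf j}(f,e_{j_1}\cdots e_{j_r})\big(\alpha_{j_1}(\alpha_{j_1}+\alpha_{j_2})\cdots(\alpha_{j_1}+\dots+\alpha_{j_r})\big)^{-1}$ ($\mathbb C[\mathsf N]$ identified with the graded dual of $U(\mathfrak n)$, $e_i$ Chevalley generators, $\alpha_i$ indeterminates). Positive roots are linear forms in the $\alpha_i$; $(\beta;P)$ = multiplicity of $\beta$ in $P$. For a reduced expression $\mathbf i$: $\beta_j=s_{i_1}\cdots s_{i_{j-1}}(\alpha_{i_j})$; $j_-(\mathbf i)=\max(\{l<j:i_l=i_j\}\cup\{0\})$; $j_+(\mathbf i)=\min(\{l>j:i_l=i_j\}\cup\{N+1\})$; $J_{ex}(\mathbf i)=\{j:j_+(\mathbf i)\le N\}$; flag minors $x_j=D(s_{i_1}\cdots s_{i_j}\omega_{i_j},\omega_{i_j})$ (unipotent minors). Properties: (A) $\overline D(x_j)=1/P_j$ with $P_j$ a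 product of positive roots, for all $j$; (B) $P_jP_{j_-}=\beta_j\prod_{l<j<l_+,\,i_l\cdot i_j=-1}P_l$ for all $j$, with $P_0=1$; (C) $(\beta_i;P_j)-(\beta_i;P_{j_+})\le1$ for all $j\in J_{ex}$, $1\le i\le N$. *)

From mathcomp Require Import all_boot all_order all_algebra.
Set Implicit Arguments. Unset Strict Implicit. Unset Printing Implicit Defensive.
Import GRing.Theory Num.Theory.
Local Open Scope ring_scope.

(* Rank r = n.+1 (so that 'I_n.+1 has a default element ord0).
   Roots are encoded by their coefficient row vectors in the basis of
   simple roots alpha_1..alpha_r: v represents sum_k v_k alpha_k. *)

Section Defs.
Variable n : nat.
Variable C : 'M[int]_n.+1.   (* Cartan matrix, C i j = i . j *)

Definition simply_laced_simple_cartan : Prop :=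
  [/\ forall i j, C i j = C j i,
      forall i, C i i = 2,
      forall i j, i != j -> C i j = 0 \/ C i j = -1,
      forall i j, connect [rel k l | C k l == -1] i j
    & forall v : 'rV[int]_n.+1, v != 0 -> 0 < (v *m C *m v^T) 0 0].

Definition sroot (i : 'I_n.+1) : 'rV[int]_n.+1 := delta_mx 0 i.

Definition refl (i : 'I_n.+1) (v : 'rV[int]_n.+1) : 'rV[int]_n.+1 :=
  v - (\sum_k v 0 k * C k i) *: sroot i.

Definition wact (w : seq 'I_n.+1) (v : 'rV[int]_n.+1) : 'rV[int]_n.+1 :=
  foldr refl v w.

(* two words represent the same Weyl group element (the Weyl group acts
   faithfully on the root lattice) *)
Definition same_elt (w w' : seq 'I_n.+1) : Prop := forall v, wact w v = wact w' v.

Definition reduced (w : seq 'I_n.+1) : Prop :=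
  forall w', same_elt w' w -> (size w <= size w')%N.

(* reduced expression of the longest element w0: a reduced word of
   maximal length (w0 is the unique element of maximal length) *)
Definition reduced_w0 (w : seq 'I_n.+1) : Prop :=
  reduced w /\ forall w', reduced w' -> (size w' <= size w)%N.

Definition is_root (v : 'rV[int]_n.+1) : Prop :=
  exists (w : seq 'I_n.+1) (i : 'I_n.+1), v = wact w (sroot i).

Definition pos_root (v : 'rV[int]_n.+1) : Prop :=
  is_root v /\ forall k, 0 <= v 0 k.

(* 1-based letters i_l of the word *)
Definition letter (w : seq 'I_n.+1) (l : nat) : 'I_n.+1 := nth ord0 w l.-1.

Definition beta (w : seq 'I_n.+1) (j : nat) : 'rV[int]_n.+1 :=
  wact (take j.-1 w) (sroot (letter w j)).

Definition jminus (w : seq 'I_n.+1) (j : nat) : nat :=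
  last 0%N [seq l <- iota 1 j.-1 | letter w l == letter w j].

Definition jplus (w : seq 'I_n.+1) (j : nat) : nat :=
  head (size w).+1 [seq l <- iota j.+1 (size w - j) | letter w l == letter w j].

Definition Jex (w : seq 'I_n.+1) (j : nat) : bool :=
  (1 <= j <= size w)%N && (jplus w j <= size w)%N.

End Defs.

From mathcomp Require Import all_boot all_order all_algebra.
From mathcomp Require Import ring zify.
Import GRing.Theory.
Set Implicit Arguments. Unset Strict Implicit. Unset Printing Implicit Defensive.
Local Open Scope ring_scope.

(* Unfolding (B) shows by induction on j that every factor of P_j is some
   beta_k with k <= j.  For a reduced word the roots beta_k are pairwise
   distinct: beta_k = beta_i with k < i would make s_{i_k} ... s_{i_i} equal
   to s_{i_(k+1)} ... s_{i_(i-1)}, so two letters could be deleted.  Hence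
   beta_i does not occur in P_j for j < i, and counting beta_i on both sides
   of (B) at j = i leaves the single factor beta_i.  Only (B) and
   reducedness of the word are used. *)

Section Reflections.
Variable n : nat.
Variable C : 'M[int]_n.+1.
Hypothesis Csym : forall i j, C i j = C j i.
Hypothesis Cdiag : forall i, C i i = 2.

Definition dot (x y : 'rV[int]_n.+1) : int := (x *m C *m y^T) 0 0.

Lemma dotC x y : dot x y = dot y x.
Proof.
have CT : C^T = C by apply/matrixP => i j; rewrite mxE Csym.
have -> : dot x y = (x *m C *m y^T)^T 0 0 by rewrite mxE.
by rewrite !trmx_mul trmxK CT mulmxA.
Qed.

Lemma dotBZl x y z c : dot (x - c *: y) z = dot x z - c * dot y z.
Proof. by rewrite /dot !mulmxBl -!scalemxAl !mxE. Qed.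

Lemma dotBZr x y z c : dot z (x - c *: y) = dot z x - c * dot z y.
Proof. by rewrite dotC dotBZl !(dotC z). Qed.

Lemma dot_sroot v i : dot v (sroot i) = \sum_k v 0 k * C k i.
Proof. by rewrite /dot /sroot trmx_delta -colE !mxE. Qed.

Lemma dot_sroot_diag i : dot (sroot i) (sroot i) = 2.
Proof.
rewrite dot_sroot (bigD1 i) //= big1 ?addr0.
  by rewrite /sroot mxE !eqxx mul1r Cdiag.
by move=> k /negbTE kNi; rewrite /sroot mxE eqxx kNi mul0r.
Qed.

Lemma reflE i v : refl C i v = v - dot v (sroot i) *: sroot i.
Proof. by rewrite /refl dot_sroot. Qed.

Lemma refl_dot i x y : dot (refl C i x) (refl C i y) = dot x y.
Proof. by rewrite !reflE dotBZl !dotBZr dot_sroot_diag (dotC (sroot i) y); ring. Qed.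

Lemma reflK i : involutive (refl C i).
Proof.
move=> v; have dotN : dot (refl C i v) (sroot i) = - dot v (sroot i).
  by rewrite reflE dotBZl dot_sroot_diag; ring.
by rewrite (reflE i (refl C i v)) dotN scaleNr opprK reflE subrK.
Qed.

Lemma reflBZ i x y c : refl C i (x - c *: y) = refl C i x - c *: refl C i y.
Proof. by rewrite !reflE dotBZl; apply/matrixP => a b; rewrite !mxE; ring. Qed.

Definition root_refl (b v : 'rV[int]_n.+1) := v - dot v b *: b.

Lemma wact_refl u j v :
  wact C u (refl C j v) = root_refl (wact C u (sroot j)) (wact C u v).
Proof.
elim: u => [|a u IHu] /=; first by rewrite reflE.
by rewrite IHu /root_refl reflBZ refl_dot.
Qed.

Lemma wact_cat u1 u2 v : wact C (u1 ++ u2) v = wact C u1 (wact C u2 v).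
Proof. by rewrite /wact foldr_cat. Qed.

Lemma wact_inj u : injective (wact C u).
Proof. by elim: u => [|a u IHu] x y //= /(inv_inj (reflK a)) /IHu. Qed.

Lemma reduced_wact_sroot_neq A x B y D :
  reduced C (A ++ x :: B ++ y :: D) ->
  wact C A (sroot x) != wact C (A ++ x :: B) (sroot y).
Proof.
move=> red; apply/negP; rewrite wact_cat => /eqP /wact_inj eq_x.
have cancel_xy v : wact C (x :: B ++ [:: y]) v = wact C B v.
  rewrite -cat_cons wact_cat [wact C [:: y] v]/= wact_refl -eq_x /root_refl -reflE.
  exact: reflK.
have same : same_elt C (A ++ B ++ D) (A ++ x :: B ++ y :: D).
  move=> v; rewrite !wact_cat.
  have -> : x :: B ++ y :: D = (x :: B ++ [:: y]) ++ D by rewrite /= -catA.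
  by rewrite wact_cat cancel_xy.
by have := red _ same; rewrite !size_cat /= size_cat /=; lia.
Qed.

Lemma beta_cat A x B y D (w := A ++ x :: B ++ y :: D) :
  beta C w (size A).+1 = wact C A (sroot x) /\
  beta C w (size A + size B).+2 = wact C (A ++ x :: B) (sroot y).
Proof.
have wE : w = (A ++ x :: B) ++ y :: D by rewrite -catA.
rewrite /beta /letter /= take_size_cat // nth_cat ltnn subnn; split=> //.
have sizeAxB : (size A + size B).+1 = size (A ++ x :: B) by rewrite size_cat addnS.
by rewrite wE sizeAxB take_size_cat // nth_cat ltnn subnn.
Qed.

Lemma beta_neq w k i :
  reduced C w -> (0 < k < i)%N -> (i <= size w)%N -> beta C w k != beta C w i.
Proof.
move=> red /andP [k_gt0 lt_ki] le_iw.
set A := take k.-1 w; set B := take (i.-1 - k) (drop k w); set D := drop i w.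
have wE : w = A ++ letter w k :: B ++ letter w i :: D.
  rewrite /letter -[in LHS](cat_take_drop k.-1 w) (drop_nth ord0); last by lia.
  rewrite prednK // -[in LHS](cat_take_drop (i.-1 - k) (drop k w)).
  rewrite drop_drop subnK; last by lia.
  by rewrite [drop i.-1 w](drop_nth ord0) ?prednK //; lia.
have [sizeA sizeB] : size A = k.-1 /\ size B = (i.-1 - k)%N.
  by rewrite !size_takel ?size_drop //; lia.
have [kE iE] : k = (size A).+1 /\ i = (size A + size B).+2 by lia.
have [betak betai] := beta_cat A (letter w k) B (letter w i) D.
rewrite -kE -iE in betak betai.
by move: red; rewrite wE betak betai; apply: reduced_wact_sroot_neq.
Qed.

End Reflections.

Lemma jminus_lt n (w : seq 'I_n.+1) j : (0 < j)%N -> (jminus w j < j)%N.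
Proof.
move=> j_gt0; rewrite /jminus.
have := mem_last 0%N [seq l <- iota 1 j.-1 | letter w l == letter w j].
rewrite in_cons mem_filter mem_iota add1n prednK // => /orP [/eqP -> //|].
by case/andP=> _ /andP [].
Qed.

Section Seed.
Variables (n : nat) (C : 'M[int]_n.+1) (w : seq 'I_n.+1).
Variable P : nat -> seq 'rV[int]_n.+1.
Hypothesis P0 : P 0%N = [::].
Hypothesis seedB : forall j, (1 <= j <= size w)%N ->
  perm_eq (P j ++ P (jminus w j))
    (beta C w j :: flatten [seq P l | l <- iota 1 (size w) &
         (l < j < jplus w l)%N && (C (letter w l) (letter w j) == -1)]).

Lemma mem_P_beta j b :
  (j <= size w)%N -> b \in P j -> exists2 k, (0 < k <= j)%N & b = beta C w k.
Proof.
elim/ltn_ind: j b => -[|j] IHj b le_jw; first by rewrite P0.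
move=> bPj; have := perm_mem (@seedB j.+1 le_jw) b.
rewrite mem_cat bPj in_cons => /esym /orP [/eqP ->|]; first by exists j.+1; rewrite ?leqnn.
case/flattenP=> s /mapP [l]; rewrite mem_filter mem_iota.
case/andP=> /andP [/andP [lt_lj _] _] /andP [l_gt0 _] -> bPl.
have [k /andP [k_gt0 le_kl] ->] := IHj l lt_lj b (ltnW (leq_trans lt_lj le_jw)) bPl.
by exists k; rewrite // k_gt0 (leq_trans le_kl (ltnW lt_lj)).
Qed.

Hypotheses (Csym : forall i j, C i j = C j i) (Cdiag : forall i, C i i = 2).
Hypothesis red : reduced C w.

Lemma count_beta_P_lt i j :
  (j < i <= size w)%N -> count_mem (beta C w i) (P j) = 0%N.
Proof.
case/andP=> lt_ji le_iw; apply/count_memPn/negP.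
case/mem_P_beta=> [|k /andP [k_gt0 le_kj] betaE]; first by lia.
have lt_ki : (0 < k < i)%N by rewrite k_gt0 (leq_ltn_trans le_kj lt_ji).
by have := beta_neq Csym Cdiag red lt_ki le_iw; rewrite betaE eqxx.
Qed.

Lemma count_beta_P_diag i :
  (0 < i <= size w)%N -> count_mem (beta C w i) (P i) = 1%N.
Proof.
move=> /[dup] /andP [i_gt0 le_iw] /seedB /permP /(_ (pred1 (beta C w i))).
rewrite count_cat (@count_beta_P_lt i (jminus w i)) ?jminus_lt ?le_iw //= eqxx addn0 => ->.
apply/eqP; rewrite eqSS; apply/eqP/count_memPn/flattenP=> -[s /mapP [l]].
rewrite mem_filter mem_iota => /andP [/andP [/andP [lt_li _] _] _] -> betaPl.
have lt_liw : (l < i <= size w)%N by rewrite lt_li.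
by move/count_memPn: (count_beta_P_lt lt_liw); rewrite betaPl.
Qed.

End Seed.

Theorem lemma6p5 (n : nat) (C : 'M[int]_n.+1) (w : seq 'I_n.+1)
  (P : nat -> seq 'rV[int]_n.+1) :
  simply_laced_simple_cartan C ->
  reduced_w0 C w ->
  (* (A): each P_j (1 <= j <= N) is a product of positive roots *)
  (forall j, (1 <= j <= size w)%N -> forall b, b \in P j -> pos_root C b) ->
  P 0%N = [::] ->
  (* (B) *)
  (forall j, (1 <= j <= size w)%N ->
     perm_eq (P j ++ P (jminus w j))
       (beta C w j :: flatten [seq P l | l <- iota 1 (size w) &
            (l < j < jplus w l)%N && (C (letter w l) (letter w j) == -1)])) ->
  (* (C) *)
  (forall j i, Jex w j -> (1 <= i <= size w)%N ->
     (count_mem (beta C w i) (P j) <= (count_mem (beta C w i) (P (jplus w j))).+1)%N) ->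
  forall i j, Jex w i -> Jex w j ->
    ((j < i)%N -> count_mem (beta C w i) (P j) = 0%N) /\
    count_mem (beta C w i) (P i) = 1%N.
Proof.
move=> [Csym Cdiag _ _ _] [red _] _ P0 seedB _ i j /andP [range_i _] _.
split; last exact: count_beta_P_diag.
by move=> lt_ji; apply: count_beta_P_lt; rewrite // lt_ji; case/andP: range_i.
Qed.
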